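(* If $A$ is an elementary abelian $p^n$-group of ppc-rank $r$, then there are exactly $r+1$ isomorphism classes of interchange rings $(A,+,\bullet)$ with additive group $(A,+)$ for which $(A,\bullet)$ is both commutative and associative.
   Context: For a prime $p$ and integers $n,r\ge1$, an elementary abelian $p^n$-group of ppc-rank $r$ is a direct sum of $r$ copies of the cyclic group of order $p^n$. An interchange ring is a triple $(A,+,\bullet)$ where $(A,+)$ is an abelian group and $\bullet$ is a binary operation satisfying $(w+x)\bullet(y+z) = (w\bullet y)+(x\bullet z)$ for all $w,x,y,z\in A$. An isomorphism of interchange rings is a bijection that is a homomorphism for both operations. *)

From HB Require Import structures.
From mathcomp Require Import all_boot all_order all_algebra.
Set Implicit Arguments. Unset Strict Implicit. Unset Printing Implicit Defensive.
Import GRing.Theory.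
Local Open Scope ring_scope.

(* (A,+) is an elementary abelian p^n-group of ppc-rank r: it is isomorphic
   (as an abelian group) to the direct sum of r copies of Z/p^n Z. *)
Definition elem_abelian (p n r : nat) (A : zmodType) : Prop :=
  exists phi : A -> 'rV['Z_(p ^ n)%N]_r,
    bijective phi /\ (forall x y : A, phi (x + y) = phi x + phi y).

Definition interchange (A : zmodType) (op : A -> A -> A) : Prop :=
  forall w x y z : A, op (w + x) (y + z) = op w y + op x z.

Definition comm_assoc_interchange (A : zmodType) (op : A -> A -> A) : Prop :=
  interchange op /\ (forall x y, op x y = op y x) /\
  (forall x y z, op x (op y z) = op (op x y) z).

Definition ir_isomorphic (A : zmodType) (op1 op2 : A -> A -> A) : Prop :=
  exists f : A -> A, bijective f /\
    (forall x y, f (x + y) = f x + f y) /\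
    (forall x y, f (op1 x y) = op2 (f x) (f y)).

From HB Require Import structures.
From mathcomp Require Import all_boot all_order all_algebra.
Set Implicit Arguments. Unset Strict Implicit. Unset Printing Implicit Defensive.
Import GRing.Theory.
Local Open Scope ring_scope.

(* 1. Structure (any abelian group): a commutative associative interchange
      operation is x * y = e x + e y for the additive idempotent e = ( * 0);
      conversely every additive idempotent gives one, and isomorphisms of
      such rings are exactly automorphisms of (A,+) conjugating the
      idempotents.
   2. Linear algebra: idempotent matrices over a local ring are similar to
      a partial identity pid_mx k.  Over the residue field this comes from
      the echelon decomposition; the similarity is lifted by averaging an
      arbitrary lift over the two idempotents.  Z/p^n is local with residue
      field F_p, and additive maps on (Z/p^n)^r are matrices.
   3. Counting: the fixed points of pid_mx k form a strictly increasing chain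
      in k, so projections of different ranks are not conjugate.
   The theorem follows with the r+1 coordinate projections as representatives. *)

Lemma add_morph0 (U V : zmodType) (f : U -> V) :
  {morph f : x y / x + y} -> f 0 = 0.
Proof. by move=> fD; apply: (addrI (f 0)); rewrite -fD !addr0. Qed.

Section InterchangeRings.
Variable A : zmodType.

Definition sum_op (e : A -> A) : A -> A -> A := fun x y => e x + e y.

Lemma comm_assoc_interchange_sum_op (op : A -> A -> A) :
  comm_assoc_interchange op ->
  [/\ {morph op^~ 0 : x y / x + y}, idempotent_fun (op^~ 0)
    & op =2 sum_op (op^~ 0)].
Proof.
move=> [opI [opC opA]].
have eD : {morph op^~ 0 : x y / x + y} by move=> x y /=; rewrite -opI addr0.
have e0 : op 0 0 = 0 by apply: (add_morph0 eD).
split=> // [x | x y] /=; first by rewrite -opA e0.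
by rewrite /sum_op -{1}[x]addr0 -{1}[y]add0r opI (opC 0 y).
Qed.

Lemma sum_op_comm_assoc (e : A -> A) :
  {morph e : x y / x + y} -> idempotent_fun e -> comm_assoc_interchange (sum_op e).
Proof.
move=> eD ee; have eeE x : e (e x) = e x := ee x.
split; [|split] => [w x y z | x y | x y z]; rewrite /sum_op.
- by rewrite !eD addrACA.
- exact: addrC.
- by rewrite !eD !eeE addrA.
Qed.

Lemma sum_op_iso (op : A -> A -> A) (e1 e2 f : A -> A) :
  op =2 sum_op e1 -> bijective f -> {morph f : x y / x + y} ->
  (forall x, f (e1 x) = e2 (f x)) -> ir_isomorphic op (sum_op e2).
Proof.
move=> opE fbij fD fe; exists f; split=> //; split=> // x y.
by rewrite opE /sum_op fD !fe.
Qed.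

Lemma sum_op_iso_conj (e1 e2 : A -> A) :
  {morph e1 : x y / x + y} -> {morph e2 : x y / x + y} ->
  ir_isomorphic (sum_op e1) (sum_op e2) ->
  exists2 f : A -> A, bijective f & forall x, f (e1 x) = e2 (f x).
Proof.
move=> e1D e2D [f [fbij [fD fop]]]; exists f => // x.
have := fop x 0; rewrite /sum_op (add_morph0 fD) (add_morph0 e1D).
by rewrite (add_morph0 e2D) !addr0.
Qed.

End InterchangeRings.

Section IdempotentComplement.
Variables (R : pzRingType) (r : nat) (M : 'M[R]_r).
Hypothesis MM : M *m M = M.

Lemma idem_compl_mulr : M *m (1%:M - M) = 0.
Proof. by rewrite mulmxBr mulmx1 MM subrr. Qed.

Lemma idem_compl_mull : (1%:M - M) *m M = 0.
Proof. by rewrite mulmxBl mul1mx MM subrr. Qed.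

Lemma idem_compl_idem : (1%:M - M) *m (1%:M - M) = 1%:M - M.
Proof. by rewrite mulmxBl mul1mx idem_compl_mulr subr0. Qed.

End IdempotentComplement.

Section Intertwiner.
Variables (R : pzRingType) (r : nat) (D E : 'M[R]_r).
Hypotheses (DD : D *m D = D) (EE : E *m E = E).

(* Averaging X over the two idempotents yields a matrix W with W E = D W;
   this is how a similarity between E and D is produced. *)
Definition intertwiner (X : 'M[R]_r) : 'M[R]_r :=
  D *m X *m E + (1%:M - D) *m X *m (1%:M - E).

Lemma intertwiner_mulr X : intertwiner X *m E = D *m X *m E.
Proof.
by rewrite /intertwiner mulmxDl -!mulmxA EE idem_compl_mull // !mulmx0 addr0.
Qed.

Lemma intertwiner_mull X : D *m intertwiner X = D *m X *m E.
Proof.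
by rewrite /intertwiner mulmxDr !mulmxA DD idem_compl_mulr // !mul0mx addr0.
Qed.

Lemma intertwiner_mull_compl X :
  (1%:M - D) *m intertwiner X = (1%:M - D) *m X *m (1%:M - E).
Proof.
by rewrite /intertwiner mulmxDr !mulmxA idem_compl_mull // idem_compl_idem //
  !mul0mx add0r.
Qed.

Lemma intertwinerP X : intertwiner X *m E = D *m intertwiner X.
Proof. by rewrite intertwiner_mulr intertwiner_mull. Qed.

Lemma intertwiner_id X : X *m E = D *m X -> intertwiner X = X.
Proof.
move=> XE.
have DXE : D *m X *m E = D *m X by rewrite -mulmxA XE mulmxA DD.
have cDXE : (1%:M - D) *m X *m (1%:M - E) = (1%:M - D) *m X.
  rewrite -mulmxA mulmxBr mulmx1 XE -{1}(mul1mx X) -mulmxBl mulmxA.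
  by rewrite idem_compl_idem.
by rewrite /intertwiner DXE cDXE -mulmxDl addrC subrK mul1mx.
Qed.

End Intertwiner.

Section FieldIdempotent.
Variables (F : fieldType) (r : nat) (E : 'M[F]_r).
Hypothesis EE : E *m E = E.

(* Over a field an idempotent matrix is similar to the partial identity of
   its rank: average the row echelon base of E over E and pid_mx (rank E). *)
Lemma idem_similar_pid_field :
  exists2 Q, Q \in unitmx & Q *m E = pid_mx (\rank E) *m Q.
Proof.
set D : 'M[F]_r := pid_mx (\rank E); set L := col_ebase E; set R := row_ebase E.
have DD : D *m D = D by apply: pid_mx_id; apply: rank_leq_col.
have EDR : E = L *m (D *m R) by rewrite mulmxA mulmx_ebase.
have DRE : D *m R *m E = D *m R.
  by rewrite -[D *m R](mulKmx (col_ebase_unit E)) -EDR -!mulmxA EE.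
set Q := intertwiner D E R.
exists Q; last exact: intertwinerP.
have sEQ : (E <= Q)%MS.
  by rewrite EDR -DRE -intertwiner_mull //; apply: submx_trans (submxMl _ _) (submxMl _ _).
have sEcQ : (1%:M - E <= Q)%MS.
  have -> : 1%:M - E = invmx R *m ((1%:M - D) *m Q).
    have DRc : D *m R *m (1%:M - E) = 0 by rewrite mulmxBr mulmx1 DRE subrr.
    rewrite intertwiner_mull_compl // mulmxBl mul1mx mulmxBl DRc subr0.
    by rewrite mulKmx ?row_ebase_unit.
  exact: submx_trans (submxMl _ _) (submxMl _ _).
by rewrite -row_full_unit -sub1mx -(subrK E 1%:M) addmx_sub.
Qed.

End FieldIdempotent.

Section LocalRingIdempotent.
(* R is a local ring with residue field F: red is onto, with section lift,
   and every element with nonzero residue is a unit. *)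
Variables (R : comUnitRingType) (F : fieldType).
Variables (red : {rmorphism R -> F}) (lift : F -> R).
Hypotheses (liftK : cancel lift red)
  (red_unit : forall x, red x != 0 -> x \is a GRing.unit).

Lemma unitmx_of_red r (H : 'M[R]_r) : map_mx red H \in unitmx -> H \in unitmx.
Proof. by rewrite !unitmxE det_map_mx unitfE; apply: red_unit. Qed.

(* Idempotents over a local ring are similar to partial identities: lift a
   similarity found over the residue field and average it. *)
Lemma idem_similar_pid r (E : 'M[R]_r) : E *m E = E ->
  exists2 k, (k <= r)%N & exists2 G, G \in unitmx & G *m E = pid_mx k *m G.
Proof.
move=> EE; set Eb := map_mx red E.
have EbE : Eb *m Eb = Eb by rewrite -map_mxM EE.
have [Q Qu QE] := idem_similar_pid_field EbE.
have kr : (\rank Eb <= r)%N by apply: rank_leq_col.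
exists (\rank Eb) => //.
set D : 'M[R]_r := pid_mx (\rank Eb).
have DD : D *m D = D by apply: pid_mx_id.
exists (intertwiner D E (map_mx lift Q)); last exact: intertwinerP.
apply: unitmx_of_red.
suff -> : map_mx red (intertwiner D E (map_mx lift Q)) = Q by [].
have liftQ : map_mx red (map_mx lift Q) = Q.
  by apply/matrixP => i j; rewrite !mxE liftK.
rewrite /intertwiner !(map_mxD, map_mxM, map_mxN, map_mx1) map_pid_mx liftQ.
by apply: intertwiner_id => //; apply: pid_mx_id.
Qed.

End LocalRingIdempotent.

Section ResidueZpn.
Variables p n : nat.
Hypotheses (p_prime : prime p) (n_gt0 : (0 < n)%N).

(* Z/p^n is a genuine quotient of the integers by p^n, not a truncation. *)
Lemma pn_gt1 : (1 < p ^ n)%N.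
Proof. by rewrite -(expn0 p) ltn_exp2l ?prime_gt1. Qed.

Definition red_pn (x : 'Z_(p ^ n)) : 'F_p := (x : nat)%:R.

Lemma red_pn_nat k : red_pn k%:R = k%:R.
Proof.
rewrite /red_pn val_Zp_nat ?pn_gt1 // -Fp_nat_mod // modn_dvdm ?Fp_nat_mod //.
by rewrite -(expn1 p) (dvdn_exp2l p n_gt0).
Qed.

Lemma red_pnD x y : red_pn (x + y) = red_pn x + red_pn y.
Proof. by rewrite -[x]natr_Zp -[y]natr_Zp -natrD !red_pn_nat natrD. Qed.

Lemma red_pn_is_zmod : zmod_morphism red_pn.
Proof. by move=> x y; rewrite -{2}(subrK y x) [red_pn (_ + y)]red_pnD addrK. Qed.

Lemma red_pn_is_monoid : monoid_morphism red_pn.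
Proof.
split=> [|x y]; first by have := red_pn_nat 1; rewrite !mulr1n.
by rewrite -[x]natr_Zp -[y]natr_Zp -natrM !red_pn_nat natrM.
Qed.

HB.instance Definition _ :=
  GRing.isZmodMorphism.Build _ _ red_pn red_pn_is_zmod.
HB.instance Definition _ :=
  GRing.isMonoidMorphism.Build _ _ red_pn red_pn_is_monoid.

Definition lift_p (y : 'F_p) : 'Z_(p ^ n) := (y : nat)%:R.

Lemma lift_pK : cancel lift_p red_pn.
Proof. by move=> y; rewrite /lift_p red_pn_nat natr_Zp. Qed.

Lemma red_pn_unit x : red_pn x != 0 -> x \is a GRing.unit.
Proof.
rewrite -[x]natr_Zp red_pn_nat unitZpE ?pn_gt1 // coprime_pexpl // prime_coprime //.
apply: contra => /dvdnP[q ->]; apply/eqP/val_inj.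
by rewrite /= val_Fp_nat // modnMl.
Qed.

Lemma idem_similar_pid_Zpn r (E : 'M['Z_(p ^ n)]_r) : E *m E = E ->
  exists2 k, (k <= r)%N & exists2 G, G \in unitmx & G *m E = pid_mx k *m G.
Proof. exact: (idem_similar_pid lift_pK red_pn_unit). Qed.

End ResidueZpn.

(* Over Z/m every additive endomorphism of row vectors is Z/m-linear (scalars
   are integers), hence is right multiplication by a matrix. *)
Lemma additive_mulmx m r (f : 'rV['Z_m]_r -> 'rV['Z_m]_r) :
  {morph f : x y / x + y} -> forall u, u *m lin1_mx f = f u.
Proof.
move=> fD u; have f0 := add_morph0 fD.
have fZ (c : 'Z_m) v : f (c *: v) = c *: f v.
  rewrite -[c]natr_Zp !scaler_nat.
  by elim: (c : nat) => [|k IHk]; rewrite ?mulr0n ?f0 // !mulrS fD IHk.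
rewrite [u in RHS]row_sum_delta (big_morph f fD f0); apply/rowP=> i.
by rewrite mxE summxE; apply: eq_bigr => j _; rewrite fZ !mxE.
Qed.

Lemma card_fixed_conj (T : finType) (e1 e2 g : T -> T) :
  bijective g -> (forall x, g (e1 x) = e2 (g x)) ->
  #|[set x | e1 x == x]| = #|[set x | e2 x == x]|.
Proof.
case=> h gK hK ge.
suff <- : g @: [set x | e1 x == x] = [set y | e2 y == y].
  by rewrite card_imset //; apply: can_inj gK.
apply/setP => y; rewrite inE; apply/imsetP/eqP => [[x] | e2y].
  by rewrite inE => /eqP e1x ->; rewrite -ge e1x.
exists (h y); last by rewrite hK.
by rewrite inE; apply/eqP/(can_inj gK); rewrite ge hK.
Qed.

Section PidFixed.
Variables (R : finNzRingType) (r : nat).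

Definition pid_fixed (k : nat) : {set 'rV[R]_r} :=
  [set u | u *m pid_mx k == u].

Lemma pid_fixed_proper a b : (a < b <= r)%N -> pid_fixed a \proper pid_fixed b.
Proof.
case/andP=> ab br; have ar : (a < r)%N := leq_trans ab br.
apply/properP; split.
  apply/subsetP => u; rewrite !inE => /eqP uS; apply/eqP.
  rewrite -{1}uS -mulmxA mul_pid_mx (minn_idPl (ltnW ab)).
  by rewrite (minn_idPr (ltnW ar)).
set d : 'rV[R]_r := delta_mx 0 (Ordinal ar).
have d_pid k : d *m pid_mx k = if (a < k)%N then d else 0.
  rewrite -rowE; apply/rowP => j; rewrite !mxE.
  by case: ifP => ak; rewrite ?mxE ?andbT ?andbF // eqxx eq_sym.
exists d; rewrite inE d_pid ?ab ?ltnn ?eqxx //.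
apply/eqP => /matrixP/(_ 0 (Ordinal ar)); rewrite !mxE !eqxx /=.
by move=> /esym/eqP; rewrite oner_eq0.
Qed.

Lemma card_pid_fixed_inj (i j : 'I_r.+1) :
  #|pid_fixed i| = #|pid_fixed j| -> i = j.
Proof.
have lt_card (a b : 'I_r.+1) : (a < b)%N -> (#|pid_fixed a| < #|pid_fixed b|)%N.
  by move=> ab; apply/proper_card/pid_fixed_proper; rewrite ab -ltnS ltn_ord.
by case: (ltngtP i j) => [/lt_card | /lt_card | /val_inj //]; move=> + eq_card;
   rewrite eq_card ltnn.
Qed.

End PidFixed.

Section CoordinateModel.
Variables (p n r : nat) (A : zmodType).
Variables (phi : A -> 'rV['Z_(p ^ n)]_r) (psi : 'rV['Z_(p ^ n)]_r -> A).
Hypotheses (phiK : cancel phi psi) (psiK : cancel psi phi)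
  (phiD : {morph phi : x y / x + y}).

Lemma psiD : {morph psi : x y / x + y}.
Proof. by move=> x y; apply: (can_inj phiK); rewrite phiD !psiK. Qed.

Definition coord_proj (k : nat) (a : A) : A := psi (phi a *m pid_mx k).

Lemma coord_proj_additive k : {morph coord_proj k : x y / x + y}.
Proof. by move=> x y; rewrite /coord_proj phiD mulmxDl psiD. Qed.

Lemma coord_proj_idem (k : 'I_r.+1) : idempotent_fun (coord_proj k).
Proof.
by move=> a; rewrite /= /coord_proj psiK -mulmxA pid_mx_id // -ltnS.
Qed.

(* Projections of different ranks are not conjugate: a conjugating bijection
   would match up their (finitely many) fixed points. *)
Lemma coord_proj_conj_inj (i j : 'I_r.+1) (f : A -> A) : bijective f ->
  (forall x, f (coord_proj i x) = coord_proj j (f x)) -> i = j.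
Proof.
case=> g fK gK fP; apply: (@card_pid_fixed_inj 'Z_(p ^ n)).
apply: (@card_fixed_conj _ _ _ (phi \o f \o psi)) => [|u /=].
  by exists (phi \o g \o psi) => u /=; rewrite !(psiK, fK, gK, phiK).
have -> : psi (u *m pid_mx i) = coord_proj i (psi u) by rewrite /coord_proj psiK.
by rewrite fP /coord_proj psiK.
Qed.

Lemma idem_conj_coord_proj (e : A -> A) : prime p -> (0 < n)%N ->
  {morph e : x y / x + y} -> idempotent_fun e ->
  exists k : 'I_r.+1, exists f : A -> A,
    [/\ bijective f, {morph f : x y / x + y}
      & forall x, f (e x) = coord_proj k (f x)].
Proof.
move=> p_prime n_gt0 eD ee.
pose E := lin1_mx (phi \o e \o psi).
have mulE u : u *m E = phi (e (psi u)).
  by apply: additive_mulmx => x y /=; rewrite psiD eD phiD.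
have phiE a : phi (e a) = phi a *m E by rewrite mulE phiK.
have EE : E *m E = E.
  apply/row_matrixP => i; rewrite !rowE mulmxA !mulE phiK.
  by rewrite [e (e _)](ee (psi _)).
have [k kr [G Gu GE]] := idem_similar_pid_Zpn p_prime n_gt0 EE.
exists (Ordinal (kr : (k < r.+1)%N)), (fun a => psi (phi a *m invmx G)); split.
- exists (fun a => psi (phi a *m G)) => a; rewrite psiK.
    by rewrite (mulmxKV Gu) phiK.
  by rewrite (mulmxK Gu) phiK.
- by move=> x y; rewrite phiD mulmxDl psiD.
- move=> x; rewrite /coord_proj psiK phiE -!mulmxA; congr (psi (_ *m _)).
  by rewrite -[E](mulKmx Gu) GE !mulmxA (mulmxK Gu).
Qed.

End CoordinateModel.

Theorem corollary6p4 (p n r : nat) (A : zmodType) :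
  prime p -> (0 < n)%N -> (0 < r)%N -> elem_abelian p n r A ->
  exists ops : 'I_r.+1 -> (A -> A -> A),
    (forall i, comm_assoc_interchange (ops i)) /\
    (forall i j, ir_isomorphic (ops i) (ops j) -> i = j) /\
    (forall op : A -> A -> A, comm_assoc_interchange op ->
       exists i, ir_isomorphic op (ops i)).
Proof.
move=> p_prime n_gt0 _ [phi [[psi phiK psiK] phiD]].
have projD := coord_proj_additive phiK psiK phiD.
exists (fun i => sum_op (coord_proj phi psi i)); split; [|split].
- by move=> i; apply: sum_op_comm_assoc; [apply: projD | apply: coord_proj_idem].
- move=> i j /sum_op_iso_conj[] // f fbij fP.
  exact: coord_proj_conj_inj fbij fP.
- move=> op /comm_assoc_interchange_sum_op[eD ee opE].
  have [k [f [fbij fD fe]]] := idem_conj_coord_proj phiK psiK phiD p_prime n_gt0 eD ee.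
  by exists k; apply: sum_op_iso opE fbij fD fe.
Qed.
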